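(* Let $n\ge3$ and $S=(a_1,\dots,a_n)$ with positive integer entries. Then $J(S)$ equals the set of $j\in\{1,\dots,n\}$ such that $S$ is not minimal with respect to $<^j$, i.e. such that there exists $S'\in(\mathbb{N}\setminus\{0\})^n$ with $S'<^jS$.
   Context: $S_i$ denotes $S$ with the $i$-th entry removed; $J(S)=\{i: a_i\nmid\mathrm{lcm}(S_i)\}$; $g_i(S)=\gcd(a_i,\mathrm{lcm}(S_i))$. For $S=(a_1,\dots,a_n)$, $S'=(a'_1,\dots,a'_n)$, $S\le^iS'$ means $S_i=S'_i$ and $g_i(S')\mid a_i\mid a'_i$; $S<^iS'$ means $S\le^iS'$ and $S\neq S'$. *)

From mathcomp Require Import all_boot.
Set Implicit Arguments. Unset Strict Implicit. Unset Printing Implicit Defensive.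

(* A sequence S = (a_1,...,a_n) is a finite function 'I_n -> nat (0-based indices). *)

Definition lcm_except n (S : {ffun 'I_n -> nat}) (i : 'I_n) : nat :=
  \big[lcmn/1%N]_(k < n | k != i) S k.

Definition Jset n (S : {ffun 'I_n -> nat}) : {set 'I_n} :=
  [set i | ~~ (S i %| lcm_except S i)].

Definition gi n (S : {ffun 'I_n -> nat}) (i : 'I_n) : nat :=
  gcdn (S i) (lcm_except S i).

Definition le_at n (i : 'I_n) (S S' : {ffun 'I_n -> nat}) : Prop :=
  (forall k : 'I_n, k != i -> S k = S' k) /\ (gi S' i %| S i) /\ (S i %| S' i).

Definition lt_at n (i : 'I_n) (S S' : {ffun 'I_n -> nat}) : Prop :=
  le_at i S S' /\ S <> S'.

From mathcomp Require Import all_boot.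
Set Implicit Arguments.
Unset Strict Implicit.
Unset Printing Implicit Defensive.

(* Since g_j(S) | a_j, the entry a_j can be lowered (for <^j) exactly to the
   divisors of a_j that are multiples of g_j(S).  A proper lowering therefore
   exists iff g_j(S) <> a_j, i.e. iff a_j does not divide lcm(S_j); in that case
   a_j := g_j(S) is one, and it stays positive. *)

Section LowerAt.

Variables (n : nat) (S : {ffun 'I_n -> nat}).

Lemma gi_idP (i : 'I_n) : reflect (gi S i = S i) (S i %| lcm_except S i).
Proof. exact: gcdn_idPl. Qed.

Lemma gi_gt0 (i : 'I_n) : 0 < S i -> 0 < gi S i.
Proof. by move=> Si_gt0; rewrite gcdn_gt0 Si_gt0. Qed.

Lemma le_at_eq (i : 'I_n) (S' : {ffun 'I_n -> nat}) :
  le_at i S' S -> S' i = S i -> S' = S.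
Proof.
move=> [eq_off _] eq_i; apply/ffunP => k.
by case: (eqVneq k i) => [->|/eq_off].
Qed.

Lemma lt_at_in_Jset (i : 'I_n) (S' : {ffun 'I_n -> nat}) :
  lt_at i S' S -> i \in Jset S.
Proof.
move=> [le_S'S neq]; rewrite inE; apply/negP => /gi_idP gi_Si.
apply/neq; apply: (le_at_eq le_S'S); apply/eqP; case: le_S'S => _ [gi_dvd dvd_Si].
by rewrite eqn_dvd dvd_Si -gi_Si.
Qed.

Definition replace_at (i : 'I_n) (x : nat) : {ffun 'I_n -> nat} :=
  [ffun k => if k == i then x else S k].

Lemma replace_at_eq (i : 'I_n) (x : nat) : replace_at i x i = x.
Proof. by rewrite ffunE eqxx. Qed.

Lemma replace_at_neq (i : 'I_n) (x : nat) (k : 'I_n) :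
  k != i -> replace_at i x k = S k.
Proof. by rewrite ffunE => /negbTE ->. Qed.

Lemma replace_at_pos (i : 'I_n) (x : nat) :
  (forall k, 0 < S k) -> 0 < x -> forall k, 0 < replace_at i x k.
Proof. by move=> S_pos x_gt0 k; rewrite ffunE; case: ifP. Qed.

Lemma lt_at_replace (i : 'I_n) (x : nat) :
  gi S i %| x -> x %| S i -> x != S i -> lt_at i (replace_at i x) S.
Proof.
move=> gi_dvd dvd_Si neq; split; last first.
  by move=> /ffunP/(_ i); rewrite replace_at_eq; apply/eqP.
by split; [exact: replace_at_neq | rewrite replace_at_eq].
Qed.

Lemma Jset_lt_at_gi (i : 'I_n) :
  i \in Jset S -> lt_at i (replace_at i (gi S i)) S.
Proof.
rewrite inE => ndvd; apply: lt_at_replace => //; first exact: dvdn_gcdl.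
by apply: contraNneq ndvd => /gi_idP.
Qed.

End LowerAt.

Theorem lemma4p11 (n : nat) (S : {ffun 'I_n -> nat}) :
  3 <= n -> (forall k : 'I_n, 0 < S k) ->
  forall j : 'I_n,
    j \in Jset S <->
    exists S' : {ffun 'I_n -> nat}, (forall k : 'I_n, 0 < S' k) /\ lt_at j S' S.
Proof.
move=> _ S_pos j; split; last by case=> S' [_ /lt_at_in_Jset].
move=> jJ; exists (replace_at S j (gi S j)); split; last exact: Jset_lt_at_gi.
exact: replace_at_pos S_pos (gi_gt0 (S_pos j)).
Qed.
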